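(* Let $K_n$ be the complete graph with $n\ge 4$ vertices and $m=n(n-1)/2$ edges, let $R=R_{K_n}$ be its $n\times m$ vertex-edge incidence matrix and $A_{\mathcal L(K_n)}$ the adjacency matrix of its line graph (edges ordered as the columns of $R$). Order the vertices of $\mathcal Q(K_n)$ with the $n$ vertices of $K_n$ first, followed by the $m$ new vertices (the new vertex on edge $e$ in the position of column $e$ of $R$). Let $0^+=n+1$, $0^-=0$, $n^{\pm}=\frac12\big(2n+1\pm\sqrt{4n+1}\big)$, and $F_n(K_n)=I_n-\frac1nJ_n$. Then: (a) $2n$ is a Laplacian eigenvalue of $\mathcal Q(K_n)$ with eigenprojector $$F_{2n}=\begin{pmatrix}\mathbf 0&\mathbf 0\\ \mathbf 0& I_m-\Big(\frac{1}{n-2}\big(A_{\mathcal L(K_n)}+2I_m\big)+\big(\frac{2}{n(n-1)}-\frac{4}{n(n-2)}\big)J_m\Big)\end{pmatrix};$$ (b) $0^{\pm}$ are Laplacian eigenvalues of $\mathcal Q(K_n)$ with eigenprojectors $$F_{0^\pm}=\frac{(2-0^\pm)^2}{(2-0^\pm)^2+2n-2}\begin{pmatrix}\frac1nJ_n&\frac{2}{n(2-0^\pm)}J_{n\times m}\\ \frac{2}{n(2-0^\pm)}J_{m\times n}&\frac{4}{n(2-0^\pm)^2}J_m\end{pmatrix};$$ (c) $n^{\pm}$ are Laplacian eigenvalues of $\mathcal Q(K_n)$ with eigenprojectors $$F_{n^\pm}=\frac{(n+2-n^\pm)^2}{(n+2-n^\pm)^2+n-2}\begin{pmatrix}F_n(K_n)&\frac{1}{n+2-n^\pm}F_n(K_n)R\\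 \frac{1}{n+2-n^\pm}(F_n(K_n)R)^\top&\frac{1}{(n+2-n^\pm)^2}R^\top F_n(K_n)R\end{pmatrix}.$$ Consequently $L_{\mathcal Q(K_n)}=0^+F_{0^+}+0^-F_{0^-}+n^+F_{n^+}+n^-F_{n^-}+2nF_{2n}$.
   Context: The Q-graph $\mathcal Q(G)$ is obtained from $G$ by inserting a new vertex into each edge of $G$ and joining by an edge each pair of new vertices lying on adjacent edges of $G$. $L_H=D_H-A_H$ denotes the Laplacian of a graph $H$; the eigenprojector of an eigenvalue is the orthogonal projection onto its eigenspace. $J$ denotes an all-ones matrix of the indicated size and $I$ an identity matrix. *)

From HB Require Import structures.
From mathcomp Require Import all_boot all_order all_algebra.
Set Implicit Arguments. Unset Strict Implicit. Unset Printing Implicit Defensive.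
Import Order.TTheory GRing.Theory Num.Theory.
Local Open Scope ring_scope.

(* Edges of the complete graph K_n : unordered pairs {i,j}, encoded as i < j. *)
Definition Kedge (n : nat) := {p : 'I_n * 'I_n | (p.1 < p.2)%N}.

Definition nedges (n : nat) : nat := #|{: Kedge n}|.

(* Fixed ordering of the edges: column e of R is the edge kedge e. *)
Definition kedge (n : nat) (e : 'I_(nedges n)) : Kedge n := enum_val e.

Definition incid (n : nat) (i : 'I_n) (e : 'I_(nedges n)) : bool :=
  (i == (val (kedge e)).1) || (i == (val (kedge e)).2).

Section Mats.
Variable R : nzRingType.

Definition incmx (n : nat) : 'M[R]_(n, nedges n) :=
  \matrix_(i, e) (incid i e)%:R.

Definition lineadj (n : nat) : 'M[R]_(nedges n) :=
  \matrix_(e, f) ((e != f) && [exists i : 'I_n, incid i e && incid i f])%:R.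

Definition laplacian (k : nat) (A : 'M[R]_k) : 'M[R]_k :=
  diag_mx (\row_i (\sum_j A i j)) - A.

(* Adjacency matrix of Q(K_n): the n original vertices first, then the m new
   vertices (new vertex of edge e in position e). Original vertices are pairwise
   non-adjacent in Q(G); original vertex i is adjacent to the new vertex on e iff
   i is an endpoint of e; two new vertices are adjacent iff their edges are
   adjacent in K_n. *)
Definition QKadj (n : nat) : 'M[R]_(n + nedges n) :=
  block_mx 0 (incmx n) (incmx n)^T (lineadj n).

Definition QKlap (n : nat) : 'M[R]_(n + nedges n) := laplacian (QKadj n).
End Mats.

(* F is the eigenprojector of the eigenvalue a of the (symmetric) matrix L:
   a is an eigenvalue, and F is the orthogonal projection onto the eigenspace,
   i.e. F is symmetric, idempotent and its range (= row space, F symmetric) is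
   the eigenspace of a. *)
Definition eigenprojector (F : fieldType) (k : nat) (L : 'M[F]_k) (a : F)
    (P : 'M[F]_k) : Prop :=
  [/\ eigenvalue L a, P^T = P, P *m P = P & (P == eigenspace L a)%MS].

(* Every matrix involved lies in the set of block matrices
     [ a I + b J          c R + d J            ]
     [ e R^T + f J        g I + h R^T R + k J  ],
   which is closed under sums and products because the incidence matrix R of K_n
   satisfies R R^T = (n-2) I + J, R J = (n-1) J and R^T J = 2 J; moreover
   A_L(K_n) = R^T R - 2 I. Each claimed matrix identity thus reduces to nine
   rational identities in n (and the eigenvalue). The five proposed projectors
   are symmetric, satisfy F L = a F for five distinct values a and sum to I.
   For such a resolution of the identity F_a F_b = 0 whenever a <> b, so each
   F_a is idempotent, its range is the whole a-eigenspace, and a is an eigenvalue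
   as soon as F_a <> 0, which is read off its trace. *)

From HB Require Import structures.
From mathcomp Require Import all_boot all_order all_algebra.
From mathcomp Require Import ring lra zify.
Set Implicit Arguments. Unset Strict Implicit. Unset Printing Implicit Defensive.
Import Order.TTheory GRing.Theory Num.Theory.

Lemma sum_Kedge n (g : 'I_n -> 'I_n -> nat) :
  \sum_(e < nedges n) g (val (kedge e)).1 (val (kedge e)).2
  = \sum_(a < n) \sum_(b < n) (a < b) * g a b.
Proof.
rewrite /kedge /nedges -(big_enum_val (fun x : Kedge n => g (val x).1 (val x).2)) /=.
transitivity (\sum_(p : 'I_n * 'I_n | (p.1 < p.2)%N) g p.1 p.2); last first.
  rewrite pair_bigA big_mkcond /=; apply: eq_bigr => p _.
  by case: ltnP; rewrite ?mul1n ?mul0n.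
rewrite (reindex_omap (val : Kedge n -> _) insub) => [|p p_lt]; last by rewrite insubT.
by apply: eq_bigl => -[p p_lt] /=; rewrite insubT /= eqxx andbT.
Qed.

Lemma sum_eq_idx n (i : 'I_n) (g : 'I_n -> nat) : \sum_(a < n) (a == i) * g a = g i.
Proof.
rewrite (bigD1 i) //= eqxx mul1n big1 ?addn0 // => a /negPf->; exact: mul0n.
Qed.

Lemma incidE n (i : 'I_n) e :
  incid i e = ((i == (val (kedge e)).1) + (i == (val (kedge e)).2))%N :> nat.
Proof.
rewrite /incid; case: (kedge e) => -[a b] /= ab.
by case: (i =P a) => [ia|]; case: (i =P b) => // ib; rewrite -ia -ib ltnn in ab.
Qed.

Lemma count_neq_ord n (i : 'I_n) : \sum_(b < n) (i < b) + \sum_(a < n) (a < i) = n.-1.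
Proof.
rewrite -big_split /= (eq_bigr (fun b => (b != i) : nat)) => [|b _]; last first.
  by rewrite -(inj_eq val_inj) /= neq_ltn; case: ltngtP.
rewrite (bigD1 i) //= eqxx add0n (eq_bigr (fun _ => 1%N)) => [|b -> //].
by rewrite sum1_card cardC1 card_ord.
Qed.

Lemma sum_incid n (i : 'I_n) (f : 'I_n -> 'I_n -> nat) :
  \sum_e incid i e * f (val (kedge e)).1 (val (kedge e)).2
  = (\sum_(b < n) (i < b) * f i b + \sum_(a < n) (a < i) * f a i)%N.
Proof.
under eq_bigr do rewrite incidE mulnDl.
rewrite (sum_Kedge (fun a b => (i == a) * f a b + (i == b) * f a b)%N).
under eq_bigr do rewrite (eq_bigr _ (fun b _ => mulnDr _ _ _)) big_split.
rewrite big_split /= [X in (_ + X)%N]exchange_big /=.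
rewrite -(sum_eq_idx i (fun a => \sum_(b < n) (a < b) * f a b)).
rewrite -(sum_eq_idx i (fun b => \sum_(a < n) (a < b) * f a b)).
by congr (_ + _)%N; apply: eq_bigr => a _; rewrite big_distrr; apply: eq_bigr => b _;
  rewrite /= mulnCA eq_sym.
Qed.

Lemma Kn_codegree n (i j : 'I_n) :
  \sum_e incid i e * incid j e = if i == j then n.-1 else 1%N.
Proof.
under eq_bigr do rewrite [incid j _ : nat]incidE.
rewrite (sum_incid i (fun a b => ((j == a) + (j == b))%N)).
case: (i =P j) => [<- | /eqP ij].
  rewrite eqxx -(count_neq_ord i); congr (_ + _)%N; apply: eq_bigr => b _;
  by rewrite -(inj_eq val_inj); case: ltngtP; rewrite ?muln0 ?muln1.
rewrite eq_sym in ij; rewrite (negPf ij).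
under eq_bigr do rewrite add0n mulnC eq_sym.
under [X in (_ + X)%N]eq_bigr do rewrite addn0 mulnC eq_sym.
rewrite !sum_eq_idx; move: ij; rewrite -(inj_eq val_inj) /=.
by case: ltngtP.
Qed.

Lemma Kn_degree n (i : 'I_n) : \sum_e incid i e = n.-1.
Proof. by under eq_bigr do rewrite -[incid i _]andbb -mulnb; rewrite Kn_codegree eqxx. Qed.

Lemma incid_common n (e f : 'I_(nedges n)) :
  \sum_i incid i e * incid i f =
  let: (a, b) := val (kedge e) in let: (c, d) := val (kedge f) in
  ((a == c) + (a == d) + (b == c) + (b == d))%N.
Proof.
under eq_bigr do rewrite !incidE mulnDl !mulnDr.
rewrite !big_split /= !sum_eq_idx.
by case: (val (kedge e)) => a b; case: (val (kedge f)) => c d; rewrite !addnA.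
Qed.

Lemma Kedge_size n (e : 'I_(nedges n)) : \sum_i incid i e = 2.
Proof.
under eq_bigr do rewrite -[incid _ e]andbb -mulnb.
rewrite incid_common; case: (kedge e) => -[a b] /= ab.
by rewrite !eqxx -(inj_eq val_inj) ltn_eqF // eq_sym -(inj_eq val_inj) ltn_eqF.
Qed.

(* Distinct edges share at most one endpoint. *)
Lemma Kedge_meet n (e f : 'I_(nedges n)) : e != f ->
  \sum_i incid i e * incid i f = [exists i, incid i e && incid i f] :> nat.
Proof.
move=> ef; rewrite incid_common /incid.
have : val (kedge e) != val (kedge f) by rewrite (inj_eq val_inj) (inj_eq enum_val_inj).
case: (kedge e) (kedge f) => -[a b] /= ab [[c d] /= cd] abcd.
have -> : [exists i, ((i == a) || (i == b)) && ((i == c) || (i == d))]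
          = [|| a == c, a == d, b == c | b == d].
  apply/existsP/idP => [[i /andP[/orP[]/eqP-> /orP[]/eqP->]] | ]; rewrite ?eqxx ?orbT //.
  by case/or4P => /eqP->; [exists c | exists d | exists c | exists d]; rewrite !eqxx ?orbT.
move: abcd; rewrite xpair_eqE -!(inj_eq val_inj) /=.
case: (a =P c) => ac; case: (a =P d) => ad; case: (b =P c) => bc; case: (b =P d) => bd /=; lia.
Qed.


Local Open Scope ring_scope.

Section IncidenceMatrix.
Variables (R : comNzRingType) (n : nat).
Local Notation Rn := (incmx R n).

Lemma incmx_mul_tr : (0 < n)%N -> Rn *m Rn^T = (n%:R - 2)%:M + const_mx 1.
Proof.
case: n => // k _; apply/matrixP=> i j; rewrite !mxE.
under eq_bigr do rewrite !mxE -natrM.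
rewrite -natr_sum Kn_codegree; case: eqP => _ /=; last by rewrite mulr0n add0r.
by rewrite mulr1n -addn1 natrD; ring.
Qed.

Lemma incmx_mulJ k : Rn *m (const_mx 1 : 'M_(nedges n, k)) = (n%:R - 1) *: const_mx 1.
Proof.
apply/matrixP=> i j; rewrite !mxE; under eq_bigr do rewrite !mxE mulr1.
rewrite -natr_sum Kn_degree mulr1; case: n i => [[]//|k' i] /=.
by rewrite -addn1 natrD addrK.
Qed.

Lemma tr_incmx_mulJ k : Rn^T *m (const_mx 1 : 'M_(n, k)) = 2 *: const_mx 1.
Proof.
apply/matrixP=> i j; rewrite !mxE; under eq_bigr do rewrite !mxE mulr1.
by rewrite -natr_sum Kedge_size mulr1.
Qed.

Lemma lineadjE : lineadj R n = Rn^T *m Rn - 2%:M.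
Proof.
apply/matrixP => e f; rewrite !mxE; under eq_bigr do rewrite !mxE -natrM.
rewrite -natr_sum; case: (e =P f) => [<- | /eqP ef] /=; last by rewrite Kedge_meet // subr0.
by under eq_bigr do rewrite mulnb andbb; rewrite Kedge_size subrr.
Qed.

End IncidenceMatrix.

Lemma const_mx1_mul (R : pzSemiRingType) a b c :
  (const_mx 1 : 'M[R]_(a, b)) *m (const_mx 1 : 'M[R]_(b, c)) = b%:R *: const_mx 1.
Proof.
apply/matrixP=> i j; rewrite !mxE; under eq_bigr do rewrite !mxE mulr1.
by rewrite sumr_const card_ord mulr1.
Qed.

Lemma mxtrace_const_mx1 (R : pzSemiRingType) k : \tr (const_mx 1 : 'M[R]_k) = k%:R.
Proof. by rewrite /mxtrace; under eq_bigr do rewrite mxE; rewrite sumr_const card_ord. Qed.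

Section QAlgebra.
Variables (R : comNzRingType) (n m : nat) (Rm : 'M[R]_(n, m)).
Hypotheses (RRt : Rm *m Rm^T = (n%:R - 2)%:M + const_mx 1)
  (RJ : forall k, Rm *m (const_mx 1 : 'M_(m, k)) = (n%:R - 1) *: const_mx 1)
  (RtJ : forall k, Rm^T *m (const_mx 1 : 'M_(n, k)) = 2 *: const_mx 1).

Local Notation J := (const_mx 1).
Local Notation S := (Rm^T *m Rm).

Lemma mulJRt k : (J : 'M_(k, m)) *m Rm^T = (n%:R - 1) *: J.
Proof. by apply: trmx_inj; rewrite trmx_mul trmxK trmx_const RJ linearZ /= trmx_const. Qed.

Lemma mulJR k : (J : 'M_(k, n)) *m Rm = 2 *: J.
Proof. by apply: trmx_inj; rewrite trmx_mul trmx_const RtJ linearZ /= trmx_const. Qed.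

Lemma mulRS : Rm *m S = (n%:R - 2) *: Rm + 2 *: J.
Proof. by rewrite mulmxA RRt mulmxDl mul_scalar_mx mulJR. Qed.

Lemma mulSRt : S *m Rm^T = (n%:R - 2) *: Rm^T + 2 *: J.
Proof. by rewrite -mulmxA RRt mulmxDr mul_mx_scalar RtJ. Qed.

Lemma mulSS : S *m S = (n%:R - 2) *: S + 4 *: J.
Proof.
rewrite -mulmxA mulRS mulmxDr -!scalemxAr RtJ scalerA.
by congr (_ + _ *: _); ring.
Qed.

Lemma mulSJ k : S *m (J : 'M_(m, k)) = (2 * (n%:R - 1)) *: J.
Proof. by rewrite -mulmxA RJ -scalemxAr RtJ scalerA mulrC. Qed.

Lemma mulJS k : (J : 'M_(k, m)) *m S = (2 * (n%:R - 1)) *: J.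
Proof. by rewrite mulmxA mulJRt -scalemxAl mulJR scalerA mulrC. Qed.

Lemma edge_count : 2 * m%:R = n%:R * (n%:R - 1) :> R.
Proof.
have := congr1 (mulmx^~ (J : 'M_(m, 1))) (mulJR 1).
rewrite -mulmxA RJ -scalemxAr -scalemxAl !const_mx1_mul !scalerA => /matrixP/(_ 0 0).
by rewrite !mxE !mulr1 mulrC.
Qed.

Definition qmx (c1 c2 c3 c4 c5 c6 c7 c8 c9 : R) : 'M[R]_(n + m) :=
  block_mx (c1%:M + c2 *: J) (c3 *: Rm + c4 *: J)
           (c5 *: Rm^T + c6 *: J) (c7%:M + c8 *: S + c9 *: J).

Local Notation N := (n%:R : R).
Local Notation M := (m%:R : R).

Lemma mul_qmx c1 c2 c3 c4 c5 c6 c7 c8 c9 d1 d2 d3 d4 d5 d6 d7 d8 d9 :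
  qmx c1 c2 c3 c4 c5 c6 c7 c8 c9 *m qmx d1 d2 d3 d4 d5 d6 d7 d8 d9 =
  qmx (c1*d1 + (N-2)*c3*d5)
    (c1*d2 + c2*d1 + N*c2*d2 + c3*d5 + (N-1)*(c3*d6 + c4*d5) + M*c4*d6)
    (c1*d3 + c3*d7 + (N-2)*c3*d8)
    (c1*d4 + 2*c2*d3 + N*c2*d4 + 2*c3*d8 + (N-1)*c3*d9 + c4*d7 + 2*(N-1)*c4*d8
       + M*c4*d9)
    (c5*d1 + c7*d5 + (N-2)*c8*d5)
    (2*c5*d2 + c6*d1 + N*c6*d2 + c7*d6 + 2*c8*d5 + 2*(N-1)*c8*d6 + (N-1)*c9*d5
       + M*c9*d6)
    (c7*d7)
    (c5*d3 + c7*d8 + c8*d7 + (N-2)*c8*d8)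
    (2*c5*d4 + 2*c6*d3 + N*c6*d4 + c7*d9 + 4*c8*d8 + 2*(N-1)*(c8*d9 + c9*d8)
       + c9*d7 + M*c9*d9).
Proof.
rewrite /qmx mulmx_block !mulmxDl !mulmxDr -!scalemxAl -!scalemxAr.
rewrite !mul_scalar_mx !mul_mx_scalar RRt !RJ !RtJ !mulJRt.
rewrite !mulJR mulRS mulSRt mulSS !mulSJ !mulJS !const_mx1_mul.
by move: S => S'; congr block_mx; apply/matrixP=> i j; rewrite !mxE; ring.
Qed.

Lemma add_qmx c1 c2 c3 c4 c5 c6 c7 c8 c9 d1 d2 d3 d4 d5 d6 d7 d8 d9 :
  qmx c1 c2 c3 c4 c5 c6 c7 c8 c9 + qmx d1 d2 d3 d4 d5 d6 d7 d8 d9 =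
  qmx (c1+d1) (c2+d2) (c3+d3) (c4+d4) (c5+d5) (c6+d6) (c7+d7) (c8+d8) (c9+d9).
Proof.
rewrite /qmx add_block_mx; move: S => S'.
by congr block_mx; apply/matrixP=> i j; rewrite !mxE; ring.
Qed.

Lemma scale_qmx a c1 c2 c3 c4 c5 c6 c7 c8 c9 :
  a *: qmx c1 c2 c3 c4 c5 c6 c7 c8 c9 =
  qmx (a*c1) (a*c2) (a*c3) (a*c4) (a*c5) (a*c6) (a*c7) (a*c8) (a*c9).
Proof.
rewrite /qmx scale_block_mx; move: S => S'.
by congr block_mx; apply/matrixP=> i j; rewrite !mxE; ring.
Qed.

Lemma tr_qmx c1 c2 c3 c4 c5 c6 c7 c8 c9 :
  (qmx c1 c2 c3 c4 c5 c6 c7 c8 c9)^T = qmx c1 c2 c5 c6 c3 c4 c7 c8 c9.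
Proof.
by rewrite /qmx tr_block_mx !linearD /= !linearZ /= trmx_mul trmxK !trmx_const !tr_scalar_mx.
Qed.

Lemma qmx1 : 1%:M = qmx 1 0 0 0 0 0 1 0 0.
Proof.
rewrite /qmx (scalar_mx_block n m); move: S => S'.
by congr block_mx; apply/matrixP=> i j; rewrite !mxE; ring.
Qed.

Lemma mxtrace_qmx c1 c2 c3 c4 c5 c6 c7 c8 c9 :
  \tr (qmx c1 c2 c3 c4 c5 c6 c7 c8 c9) = N * (c1 + c2) + M * (c7 + c9) + c8 * N * (N - 1).
Proof.
rewrite /qmx mxtrace_block !mxtraceD !mxtraceZ !mxtrace_scalar !mxtrace_const_mx1.
by rewrite mxtrace_mulC RRt mxtraceD mxtrace_scalar mxtrace_const_mx1; ring.
Qed.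

End QAlgebra.

Section SpectralResolution.
Variables (K : fieldType) (k : nat) (L : 'M[K]_k) (s : seq (K * 'M[K]_k)).
Hypotheses (symL : L^T = L) (sym_s : {in s, forall p, p.2^T = p.2})
  (eigen_s : {in s, forall p, p.2 *m L = p.1 *: p.2})
  (uniq_s : uniq (map fst s)) (sum_s : \sum_(p <- s) p.2 = 1%:M).

Lemma eigen_mul_orthogonal m (W : 'M_(m, k)) a q :
  W *m L = a *: W -> q \in s -> q.1 != a -> W *m q.2 = 0.
Proof.
move=> WL qs qa; have Lq : L *m q.2 = q.1 *: q.2.
  by apply: trmx_inj; rewrite trmx_mul symL sym_s // eigen_s // linearZ /= sym_s.
have: (a - q.1) *: (W *m q.2) = 0.
  by rewrite scalerBl scalemxAl -WL -mulmxA Lq -scalemxAr subrr.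
by move/eqP; rewrite scaler_eq0 subr_eq0 eq_sym (negPf qa) => /eqP.
Qed.

Lemma eigen_mul_resolution m (W : 'M_(m, k)) p :
  p \in s -> W *m L = p.1 *: W -> W *m p.2 = W.
Proof.
move=> ps WL; have s_rem := perm_to_rem ps.
have: p.1 \notin map fst (rem p s).
  by move: uniq_s; rewrite (perm_uniq (perm_map fst s_rem)) /= => /andP[].
move=> p_rem; rewrite -[RHS]mulmx1 -sum_s (perm_big _ s_rem) big_cons mulmxDr.
rewrite mulmx_sumr big1_seq ?addr0 // => q /andP[_ q_rem].
apply: eigen_mul_orthogonal WL (mem_rem q_rem) _.
by apply: contraNneq p_rem => <-; apply: map_f.
Qed.

Lemma resolution_eigenprojector p :
  p \in s -> p.2 != 0 -> eigenprojector L p.1 p.2.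
Proof.
move=> ps p_neq0; have sub_p : (p.2 <= eigenspace L p.1)%MS.
  by apply/eigenspaceP; apply: eigen_s.
have Ep : eigenspace L p.1 *m p.2 = eigenspace L p.1.
  by apply: eigen_mul_resolution ps _; apply/eigenspaceP.
split; [|exact: sym_s|exact: eigen_mul_resolution ps (eigen_s ps)|].
- apply: contra_neq p_neq0 => E0.
  by move: sub_p; rewrite E0 submx0 => /eqP.
- by rewrite /eqmx sub_p -{1}Ep submxMl.
Qed.

Lemma resolution_decomposition : L = \sum_(p <- s) p.1 *: p.2.
Proof.
by rewrite -[LHS]mul1mx -sum_s mulmx_suml; apply: eq_big_seq => p /eigen_s.
Qed.

End SpectralResolution.

Definition centering_mx (R : fieldType) n : 'M[R]_n := 1%:M - n%:R^-1 *: const_mx 1.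

Definition Qproj2n (R : fieldType) n : 'M[R]_(n + nedges n) :=
  block_mx 0 0 0
    (1%:M - ((n%:R - 2)^-1 *: (lineadj R n + 2%:M)
             + (2 / (n%:R * (n%:R - 1)) - 4 / (n%:R * (n%:R - 2))) *: const_mx 1)).

Definition Qproj0 (R : fieldType) n (z : R) : 'M[R]_(n + nedges n) :=
  ((2 - z) ^+ 2 / ((2 - z) ^+ 2 + 2 * n%:R - 2)) *:
    block_mx (n%:R^-1 *: const_mx 1) ((2 / (n%:R * (2 - z))) *: const_mx 1)
             ((2 / (n%:R * (2 - z))) *: const_mx 1)
             ((4 / (n%:R * (2 - z) ^+ 2)) *: const_mx 1).

Definition Qprojn (R : fieldType) n (z : R) : 'M[R]_(n + nedges n) :=
  let Fn := centering_mx R n in let Rn := incmx R n in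
  ((n%:R + 2 - z) ^+ 2 / ((n%:R + 2 - z) ^+ 2 + n%:R - 2)) *:
    block_mx Fn ((n%:R + 2 - z)^-1 *: (Fn *m Rn))
             ((n%:R + 2 - z)^-1 *: (Fn *m Rn)^T)
             (((n%:R + 2 - z) ^+ 2)^-1 *: (Rn^T *m Fn *m Rn)).

Section QKnBlocks.
Variables (R : fieldType) (n : nat).
Local Notation Rn := (incmx R n).
Local Notation qmx := (qmx Rn).
Local Notation N := (n%:R : R).

Lemma QKlap_qmx : QKlap R n = qmx (N - 1) 0 (-1) 0 (-1) 0 (2 * N) (-1) 0.
Proof.
have row_sum k (A : 'M[R]_k) : \row_i (\sum_j A i j) = (A *m const_mx 1 : 'M_(k, 1))^T.
  by apply/matrixP=> i j; rewrite !mxE; apply: eq_bigr => l _; rewrite !mxE mulr1.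
rewrite /QKlap /laplacian row_sum -(col_mx_const n (nedges n) 1) /QKadj mul_block_col mul0mx add0r.
rewrite lineadjE mulmxBl -mulmxA incmx_mulJ -scalemxAr tr_incmx_mulJ mul_scalar_mx.
rewrite tr_col_mx diag_mx_row /qmx opp_block_mx add_block_mx; move: (Rn^T *m Rn) => S.
by congr block_mx; apply/matrixP=> i j; rewrite !mxE ?oppr0 ?addr0; ring.
Qed.

Lemma Qproj2n_qmx : Qproj2n R n =
  qmx 0 0 0 0 0 0 1 (- (N - 2)^-1) (- (2 / (N * (N - 1)) - 4 / (N * (N - 2)))).
Proof.
rewrite /Qproj2n lineadjE /qmx; move: (Rn^T *m Rn) => S.
by congr block_mx; apply/matrixP=> i j; rewrite !mxE; ring.
Qed.

Lemma Qproj0_qmx z : Qproj0 n z =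
  let k := (2 - z) ^+ 2 / ((2 - z) ^+ 2 + 2 * N - 2) in
  qmx 0 (k / N) 0 (k * (2 / (N * (2 - z)))) 0 (k * (2 / (N * (2 - z)))) 0 0
      (k * (4 / (N * (2 - z) ^+ 2))).
Proof.
rewrite /Qproj0 /qmx scale_block_mx; move: (Rn^T *m Rn) => S.
by congr block_mx; apply/matrixP=> i j; rewrite !mxE; ring.
Qed.

Lemma centering_mx_incmx : centering_mx R n *m Rn = Rn - (2 / N) *: const_mx 1.
Proof.
by rewrite mulmxBl mul1mx -scalemxAl (mulJR (tr_incmx_mulJ R n)) scalerA mulrC.
Qed.

Lemma Qprojn_qmx z : Qprojn n z =
  let k := (N + 2 - z) ^+ 2 / ((N + 2 - z) ^+ 2 + N - 2) in
  let c := (N + 2 - z)^-1 in let d := ((N + 2 - z) ^+ 2)^-1 in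
  qmx k (- k / N) (k * c) (- 2 * k * c / N) (k * c) (- 2 * k * c / N) 0 (k * d)
      (- 4 * k * d / N).
Proof.
have RFR : Rn^T *m centering_mx R n *m Rn = Rn^T *m Rn - (4 / N) *: const_mx 1.
  rewrite -mulmxA centering_mx_incmx mulmxBr -scalemxAr tr_incmx_mulJ scalerA.
  by congr (_ - _ *: _); ring.
rewrite /Qprojn centering_mx_incmx RFR /qmx scale_block_mx /centering_mx.
rewrite !linearD /= !linearN /= !linearZ /= trmx_const; move: (Rn^T *m Rn) => S.
by congr block_mx; apply/matrixP=> i j; rewrite !mxE; ring.
Qed.

End QKnBlocks.

Ltac neq0_nra := do ?[apply/andP; split]; try done; apply/eqP => ?; nra.

Section QKnSpectrum.
Variables (R : realFieldType) (n : nat).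
Hypothesis n_gt2 : (2 < n)%N.
Local Notation Rn := (incmx R n).
Local Notation N := (n%:R : R).
Local Notation L := (QKlap R n).

Let N_gt2 : 2 < N. Proof. by rewrite ltr_nat. Qed.
Let RRt := incmx_mul_tr R (ltnW (ltnW n_gt2)).
Let RJ := incmx_mulJ R n.
Let RtJ := tr_incmx_mulJ R n.
Let edge_countE : (nedges n)%:R = N * (N - 1) / 2 :> R.
Proof. by rewrite -(edge_count RJ RtJ); field. Qed.

Lemma QKlap_sym : L^T = L.
Proof. by rewrite QKlap_qmx tr_qmx. Qed.

Lemma Qproj2n_sym : (Qproj2n R n)^T = Qproj2n R n.
Proof. by rewrite Qproj2n_qmx tr_qmx. Qed.

Lemma Qproj0_sym (z : R) : (Qproj0 n z)^T = Qproj0 n z.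
Proof. by rewrite Qproj0_qmx tr_qmx. Qed.

Lemma Qprojn_sym (z : R) : (Qprojn n z)^T = Qprojn n z.
Proof. by rewrite Qprojn_qmx tr_qmx. Qed.

Lemma Qproj2n_eigen : Qproj2n R n *m L = (2 * N) *: Qproj2n R n.
Proof.
rewrite Qproj2n_qmx QKlap_qmx (mul_qmx RRt RJ RtJ) scale_qmx.
(* [n%:R] occurs at several canonical instances, which [nra] would treat as
   distinct atoms; generalizing it merges them. *)
by congr (qmx _ _ _ _ _ _ _ _ _ _); rewrite ?edge_countE; move: (n%:R : R) N_gt2 => x hx;
  field; neq0_nra.
Qed.

Lemma Qproj0_eigen (z : R) : z * (z - (N + 1)) = 0 -> Qproj0 n z *m L = z *: Qproj0 n z.
Proof.
move=> /eqP; rewrite mulf_eq0 subr_eq0 => /orP[]/eqP->;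
rewrite Qproj0_qmx QKlap_qmx (mul_qmx RRt RJ RtJ) scale_qmx;
by congr (qmx _ _ _ _ _ _ _ _ _ _); rewrite ?edge_countE; move: (n%:R : R) N_gt2 => x hx;
  field; neq0_nra.
Qed.

(* n^+- = ((sqrt(4n+1) +- 1)/2)^2: writing them as ((t + 1)/2)^2 with t = +-sqrt(4n+1),
   i.e. n = (t^2 - 1)/4, turns every identity into a rational one in t. *)
Lemma Qprojn_eigen (t : R) : t ^+ 2 = 4 * N + 1 ->
  Qprojn n ((t + 1) ^+ 2 / 4) *m L = ((t + 1) ^+ 2 / 4) *: Qprojn n ((t + 1) ^+ 2 / 4).
Proof.
move=> t2; have Nt : N = (t ^+ 2 - 1) / 4 by rewrite t2; field.
have t2_gt9 : 9 < t ^+ 2 by have := N_gt2; lra.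
rewrite Qprojn_qmx QKlap_qmx (mul_qmx RRt RJ RtJ) scale_qmx.
by congr (qmx _ _ _ _ _ _ _ _ _ _); rewrite ?edge_countE ?Nt; field; neq0_nra.
Qed.

Lemma mxtrace_Qproj2n : \tr (Qproj2n R n) = N * (N - 3) / 2.
Proof.
rewrite Qproj2n_qmx (mxtrace_qmx RRt) edge_countE.
by move: (n%:R : R) N_gt2 => x hx; field; neq0_nra.
Qed.

Lemma mxtrace_Qproj0 (z : R) : z * (z - (N + 1)) = 0 -> \tr (Qproj0 n z) = 1.
Proof.
move=> /eqP; rewrite mulf_eq0 subr_eq0 => /orP[]/eqP->;
by rewrite Qproj0_qmx (mxtrace_qmx RRt) edge_countE; move: (n%:R : R) N_gt2 => x hx;
  field; neq0_nra.
Qed.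

Lemma mxtrace_Qprojn (t : R) : t ^+ 2 = 4 * N + 1 ->
  \tr (Qprojn n ((t + 1) ^+ 2 / 4)) = N - 1.
Proof.
move=> t2; have Nt : N = (t ^+ 2 - 1) / 4 by rewrite t2; field.
have t2_gt9 : 9 < t ^+ 2 by have := N_gt2; lra.
by rewrite Qprojn_qmx (mxtrace_qmx RRt) edge_countE Nt; field; neq0_nra.
Qed.

Definition Qresolution (t : R) : seq (R * 'M[R]_(n + nedges n)) :=
  [:: (N + 1, Qproj0 n (N + 1)); (0, Qproj0 n 0);
      ((t + 1) ^+ 2 / 4, Qprojn n ((t + 1) ^+ 2 / 4));
      ((- t + 1) ^+ 2 / 4, Qprojn n ((- t + 1) ^+ 2 / 4)); (2 * N, Qproj2n R n)].

Lemma Qresolution_sym (t : R) : {in Qresolution t, forall p, p.2^T = p.2}.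
Proof.
by move=> p; rewrite !inE => /or4P[| | | /orP[]] /eqP-> /=;
  rewrite ?Qproj0_sym ?Qprojn_sym ?Qproj2n_sym.
Qed.

Lemma Qresolution_eigen (t : R) : t ^+ 2 = 4 * N + 1 ->
  {in Qresolution t, forall p, p.2 *m L = p.1 *: p.2}.
Proof.
move=> t2 p; rewrite !inE => /or4P[| | | /orP[]] /eqP-> /=.
- by apply: Qproj0_eigen; rewrite subrr mulr0.
- by apply: Qproj0_eigen; rewrite mul0r.
- exact: Qprojn_eigen.
- by apply: Qprojn_eigen; rewrite sqrrN.
- exact: Qproj2n_eigen.
Qed.

Lemma Qresolution_uniq (t : R) : t ^+ 2 = 4 * N + 1 -> uniq (map fst (Qresolution t)).
Proof.
move=> t2; have t2_gt9 : 9 < t ^+ 2 by have := N_gt2; lra.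
have := N_gt2; move: t2; rewrite /= !inE !negb_or -!andbA; move: (n%:R : R) => x t2 hx.
by do ![apply/andP; split]; try done; apply/eqP => ?; nra.
Qed.

Lemma Qresolution_sum (t : R) : t ^+ 2 = 4 * N + 1 ->
  \sum_(p <- Qresolution t) p.2 = 1%:M.
Proof.
move=> t2; have Nt : N = (t ^+ 2 - 1) / 4 by rewrite t2; field.
have t2_gt9 : 9 < t ^+ 2 by have := N_gt2; lra.
rewrite !big_cons big_nil addr0 !Qproj0_qmx !Qprojn_qmx Qproj2n_qmx !add_qmx (qmx1 Rn).
by congr (qmx _ _ _ _ _ _ _ _ _ _); rewrite ?Nt; field; neq0_nra.
Qed.

Lemma Qresolution_decomposition (t : R) : t ^+ 2 = 4 * N + 1 ->
  L = \sum_(p <- Qresolution t) p.1 *: p.2.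
Proof.
by move=> t2; apply: resolution_decomposition (Qresolution_eigen t2) (Qresolution_sum t2).
Qed.

End QKnSpectrum.

Lemma Qresolution_eigenprojector (R : realFieldType) n (t : R) :
  (3 < n)%N -> t ^+ 2 = 4 * n%:R + 1 ->
  {in Qresolution n t, forall p, eigenprojector (QKlap R n) p.1 p.2}.
Proof.
move=> n_gt3 t2; have n_gt2 := ltnW n_gt3; have N_gt3 : 3 < n%:R :> R by rewrite ltr_nat.
move=> p p_res; apply: (resolution_eigenprojector (QKlap_sym R n) (@Qresolution_sym R n t)
  (Qresolution_eigen n_gt2 t2) (Qresolution_uniq n_gt2 t2) (Qresolution_sum n_gt2 t2) p_res).
apply: contra_neq (_ : \tr p.2 != 0) => [->|]; first exact: mxtrace0.
move: p_res; rewrite !inE => /or4P[| | | /orP[]] /eqP-> /=.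
- by rewrite mxtrace_Qproj0 ?oner_eq0 // subrr mulr0.
- by rewrite mxtrace_Qproj0 ?oner_eq0 // mul0r.
- by rewrite mxtrace_Qprojn //; apply/eqP => ?; lra.
- by rewrite mxtrace_Qprojn ?sqrrN //; apply/eqP => ?; lra.
- by rewrite mxtrace_Qproj2n //; apply/eqP => ?; nra.
Qed.

Theorem lemma3p6 (R : rcfType) (n : nat) (hn : (4 <= n)%N) :
  let m := nedges n in
  let Rm : 'M[R]_(n, m) := incmx R n in
  let AL : 'M[R]_m := lineadj R n in
  let L : 'M[R]_(n + m) := QKlap R n in
  let nr : R := n%:R in
  let zp : R := nr + 1 in
  let zm : R := 0 in
  let np : R := (2 * nr + 1 + Num.sqrt (4 * nr + 1)) / 2 in
  let nm : R := (2 * nr + 1 - Num.sqrt (4 * nr + 1)) / 2 in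
  let Fn : 'M[R]_n := 1%:M - nr^-1 *: const_mx 1 in
  let F2n : 'M[R]_(n + m) :=
    block_mx 0 0 0
      (1%:M - ((nr - 2)^-1 *: (AL + 2%:M)
               + (2 / (nr * (nr - 1)) - 4 / (nr * (nr - 2))) *: const_mx 1)) in
  let F0 (z : R) : 'M[R]_(n + m) :=
    ((2 - z) ^+ 2 / ((2 - z) ^+ 2 + 2 * nr - 2)) *:
      block_mx (nr^-1 *: const_mx 1) ((2 / (nr * (2 - z))) *: const_mx 1)
               ((2 / (nr * (2 - z))) *: const_mx 1)
               ((4 / (nr * (2 - z) ^+ 2)) *: const_mx 1) in
  let Fnpm (z : R) : 'M[R]_(n + m) :=
    ((nr + 2 - z) ^+ 2 / ((nr + 2 - z) ^+ 2 + nr - 2)) *: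
      block_mx Fn ((nr + 2 - z)^-1 *: (Fn *m Rm))
               ((nr + 2 - z)^-1 *: (Fn *m Rm)^T)
               (((nr + 2 - z) ^+ 2)^-1 *: (Rm^T *m Fn *m Rm)) in
  [/\ eigenprojector L (2 * nr) F2n,
      eigenprojector L zp (F0 zp) /\ eigenprojector L zm (F0 zm),
      eigenprojector L np (Fnpm np) /\ eigenprojector L nm (Fnpm nm) &
      L = zp *: F0 zp + zm *: F0 zm + np *: Fnpm np + nm *: Fnpm nm
          + (2 * nr) *: F2n].
Proof.
move=> m Rm AL L nr zp zm np nm Fn F2n F0 Fnpm.
pose s := Num.sqrt (4 * nr + 1).
have s2 : s ^+ 2 = 4 * nr + 1 by rewrite sqr_sqrtr // addr_ge0 ?mulr_ge0 ?ler0n.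
have -> : np = (s + 1) ^+ 2 / 4 by rewrite /np -/s; nra.
have -> : nm = (- s + 1) ^+ 2 / 4 by rewrite /nm -/s; nra.
have proj := Qresolution_eigenprojector hn s2.
split.
- by apply: (proj (_, F2n)); do 4!apply: mem_behead; exact: mem_head.
- split; first by apply: (proj (_, F0 zp)); exact: mem_head.
  by apply: (proj (_, F0 zm)); apply: mem_behead; exact: mem_head.
- split; first by apply: (proj (_, Fnpm _)); do 2!apply: mem_behead; exact: mem_head.
  by apply: (proj (_, Fnpm _)); do 3!apply: mem_behead; exact: mem_head.
- by rewrite [L](Qresolution_decomposition (ltnW hn) s2) !big_cons big_nil addr0 !addrA.
Qed.
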